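(* Let $K,N$ be symmetric homogeneous stable means and $M$ a symmetric homogeneous mean, all having symmetric asymptotic expansions with coefficients $(a^K_n),(a^N_n),(a^M_n)$. If $M$ is simultaneously $(K,N)$-stabilized and $(N,K)$-stabilized, then either $a^K_1=a^N_1$, or $a^K_1+a^N_1=-1$. In the first case $a^M_1=a^K_1=a^N_1$ and $a^M_2=\frac16a^M_1(1+a^M_1)(1-4a^M_1)$; in the second case $a^M_1=-\frac12$ and $a^M_2=-\frac18$.
   Context: A bi-variate mean is $M:(0,\infty)^2\to(0,\infty)$ with $\min\le M\le\max$; symmetric and homogeneous (degree 1). $M$ is stable if $M(s,t)=M\big(M(s,M(s,t)),M(M(s,t),t)\big)$. For stable means $K,N$, $M$ is $(K,N)$-stabilized if $M(s,t)=K\big(N(s,M(s,t)),N(M(s,t),t)\big)$ for all $s,t>0$. A mean has a symmetric asymptotic expansion with coefficients $(a_n)$ if for every fixed real $t$ and $N\ge0$, $M(x-t,x+t)=\sum_{n=0}^Na_nt^{2n}x^{-2n+1}+o(x^{-2N+1})$ as $x\to\infty$. *)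

From Stdlib Require Import Reals Lra.
Open Scope R_scope.

(* A bi-variate mean: M maps (0,oo)^2 into (0,oo) with min <= M <= max.
   M is a total function R -> R -> R; only its values on positive
   arguments matter. *)
Definition is_mean (M : R -> R -> R) : Prop :=
  forall s t, 0 < s -> 0 < t ->
    0 < M s t /\ Rmin s t <= M s t /\ M s t <= Rmax s t.

Definition symmetric_mean (M : R -> R -> R) : Prop :=
  forall s t, 0 < s -> 0 < t -> M s t = M t s.

Definition homogeneous_mean (M : R -> R -> R) : Prop :=
  forall l s t, 0 < l -> 0 < s -> 0 < t -> M (l * s) (l * t) = l * M s t.

Definition stable_mean (M : R -> R -> R) : Prop :=
  forall s t, 0 < s -> 0 < t ->
    M s t = M (M s (M s t)) (M (M s t) t).

Definition stabilized (K N M : R -> R -> R) : Prop :=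
  forall s t, 0 < s -> 0 < t ->
    M s t = K (N s (M s t)) (N (M s t) t).

Definition sym_partial_sum (a : nat -> R) (t x : R) (Nn : nat) : R :=
  sum_f_R0 (fun n => a n * t ^ (2 * n) * powerRZ x (1 - 2 * Z.of_nat n)) Nn.

Definition has_sym_asymp_expansion (M : R -> R -> R) (a : nat -> R) : Prop :=
  forall (t : R) (Nn : nat) (eps : R), 0 < eps ->
    exists X : R, forall x : R, X < x ->
      Rabs (M (x - t) (x + t) - sym_partial_sum a t x Nn)
        <= eps * powerRZ x (1 - 2 * Z.of_nat Nn).

(* For a homogeneous mean X put  profile X u = X(1-u, 1+u);
   homogeneity gives  X(A,B) = (A+B)/2 * profile X ((B-A)/(A+B)).  Taking t = 1 and
   x = 1/u in the asymptotic expansion of X shows that the profile is even and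
   profile X u = 1 + a_1 u^2 + a_2 u^4 + o(u^4)  as u -> 0.

   Such expansions are handled by "jets": 5-tuples of coefficients of a polynomial of
   degree 4, with  has_jet F x  meaning  F u = x(u) + o(u^4).  Jets are closed under sum,
   product, inverse and composition, and are unique.  Hence the jet of
   u |-> X(A u, B u)  is computed from the jets of profile X, A and B.

   Applying this to the identity  M(1-u,1+u) = K(N(1-u, M(1-u,1+u)), N(M(1-u,1+u), 1+u))
   and comparing jets yields two polynomial identities between the coefficients
   (stabilization_identities).  They hold for the triples (K,N,M), (N,K,M) and, by
   stability, (K,K,K) and (N,N,N); elementary algebra then gives the theorem. *)

From Stdlib Require Import Reals Lra Lia.
From Coquelicot Require Import Coquelicot.
Open Scope R_scope.

(** * Neighbourhoods of 0 and little-o *)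

Lemma locally0_iff (P : R -> Prop) :
  locally 0 P <-> exists d, 0 < d /\ forall u, Rabs u < d -> P u.
Proof.
  assert (Ball : forall (e : posreal) u, ball 0 e u <-> Rabs u < e).
  { intros e u. unfold ball; simpl; unfold AbsRing_ball, abs, minus, plus, opp; simpl.
    rewrite Ropp_0, Rplus_0_r. tauto. }
  split.
  - intros [e He]. exists e; split; [apply cond_pos|].
    intros u Hu. apply He, Ball, Hu.
  - intros [d [Hd H]]. exists (mkposreal d Hd). intros u Hu. apply H, (Ball (mkposreal d Hd)), Hu.
Qed.

Local Notation near0_and := (filter_and (F := locally 0)).

Lemma locally0_abs_lt (d : R) : 0 < d -> locally 0 (fun u => Rabs u < d).
Proof. intro Hd. apply locally0_iff. exists d; auto. Qed.

Definition little_o (n : nat) (g : R -> R) : Prop :=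
  forall eps, 0 < eps -> locally 0 (fun u => Rabs (g u) <= eps * Rabs u ^ n).

Definition bounded_near0 (h : R -> R) : Prop :=
  exists B, locally 0 (fun u => Rabs (h u) <= B).

Lemma pow_abs_le_1 (u : R) (n : nat) : Rabs u <= 1 -> Rabs u ^ n <= 1.
Proof. intro Hu. rewrite <- (pow1 n). apply pow_incr. split; [apply Rabs_pos|exact Hu]. Qed.

Lemma pow_abs_antimono (u : R) (k n : nat) : Rabs u <= 1 -> (k <= n)%nat ->
  Rabs u ^ n <= Rabs u ^ k.
Proof.
  intros Hu Hkn. replace n with (k + (n - k))%nat by lia. rewrite pow_add.
  pose proof (pow_le (Rabs u) k (Rabs_pos u)).
  pose proof (pow_abs_le_1 u (n - k) Hu).
  pose proof (pow_le (Rabs u) (n - k) (Rabs_pos u)). nra.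
Qed.

Lemma bounded_const (c : R) : bounded_near0 (fun _ => c).
Proof. exists (Rabs c). apply filter_forall. intros; lra. Qed.

Lemma bounded_id : bounded_near0 (fun u => u).
Proof.
  exists 1. eapply filter_imp; [|exact (locally0_abs_lt 1 Rlt_0_1)]. intros; lra.
Qed.

Lemma bounded_plus (g h : R -> R) :
  bounded_near0 g -> bounded_near0 h -> bounded_near0 (fun u => g u + h u).
Proof.
  intros [B HB] [C HC]. exists (B + C).
  eapply filter_imp; [|exact (near0_and _ _ HB HC)]. intros u [Hg Hh].
  eapply Rle_trans; [apply Rabs_triang|lra].
Qed.

Lemma bounded_mult (g h : R -> R) :
  bounded_near0 g -> bounded_near0 h -> bounded_near0 (fun u => g u * h u).
Proof.
  intros [B HB] [C HC]. exists (Rabs B * Rabs C).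
  eapply filter_imp; [|exact (near0_and _ _ HB HC)]. intros u [Hg Hh].
  rewrite Rabs_mult. pose proof (Rle_abs B). pose proof (Rle_abs C).
  apply Rmult_le_compat; auto using Rabs_pos; lra.
Qed.

Lemma bounded_pow (n : nat) : bounded_near0 (fun u => u ^ n).
Proof.
  induction n as [|n IH]; [exact (bounded_const 1)|exact (bounded_mult _ _ bounded_id IH)].
Qed.

Lemma little_o_bounded (n : nat) (g : R -> R) : little_o n g -> bounded_near0 g.
Proof.
  intro Hg. exists 1.
  eapply filter_imp; [|exact (near0_and _ _ (Hg 1 Rlt_0_1) (locally0_abs_lt 1 Rlt_0_1))].
  intros u [H1 H2]. pose proof (pow_abs_le_1 u n ltac:(lra)). lra.
Qed.

Lemma little_o_ext (n : nat) (g h : R -> R) :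
  locally 0 (fun u => g u = h u) -> little_o n g -> little_o n h.
Proof.
  intros E Hg eps Heps. eapply filter_imp; [|exact (near0_and _ _ E (Hg eps Heps))].
  intros u [Eu Hu]. rewrite <- Eu. exact Hu.
Qed.

Lemma little_o_zero (n : nat) : little_o n (fun _ => 0).
Proof.
  intros eps Heps. apply filter_forall. intro u. rewrite Rabs_R0.
  apply Rmult_le_pos; [lra|apply pow_le, Rabs_pos].
Qed.

Lemma little_o_plus (n : nat) (g h : R -> R) :
  little_o n g -> little_o n h -> little_o n (fun u => g u + h u).
Proof.
  intros Hg Hh eps Heps.
  eapply filter_imp;
    [|exact (near0_and _ _ (Hg (eps / 2) ltac:(lra)) (Hh (eps / 2) ltac:(lra)))].
  intros u [H1 H2]. eapply Rle_trans; [apply Rabs_triang|lra].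
Qed.

Lemma little_o_mult_bounded (n : nat) (g h : R -> R) :
  little_o n g -> bounded_near0 h -> little_o n (fun u => g u * h u).
Proof.
  intros Hg [B HB] eps Heps.
  set (B' := Rabs B + 1).
  assert (HB' : 0 < B') by (unfold B'; pose proof (Rabs_pos B); lra).
  eapply filter_imp; [|exact (near0_and _ _ (Hg (eps / B') (Rdiv_lt_0_compat _ _ Heps HB')) HB)].
  intros u [Hgu Hhu]. rewrite Rabs_mult.
  assert (Hh' : Rabs (h u) <= B') by (unfold B'; pose proof (Rle_abs B); lra).
  apply Rle_trans with (eps / B' * Rabs u ^ n * B').
  - apply Rmult_le_compat; auto using Rabs_pos.
  - right; field; lra.
Qed.

Lemma little_o_scal (n : nat) (c : R) (g : R -> R) :
  little_o n g -> little_o n (fun u => c * g u).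
Proof.
  intro Hg. apply (little_o_ext n (fun u => g u * c)).
  - apply filter_forall. intro; ring.
  - exact (little_o_mult_bounded n g _ Hg (bounded_const c)).
Qed.

Lemma little_o_pow_succ (n : nat) (h : R -> R) :
  bounded_near0 h -> little_o n (fun u => u ^ S n * h u).
Proof.
  intros [B HB] eps Heps.
  set (B' := Rabs B + 1).
  assert (HB' : 0 < B') by (unfold B'; pose proof (Rabs_pos B); lra).
  eapply filter_imp;
    [|exact (near0_and _ _ HB (locally0_abs_lt (eps / B') (Rdiv_lt_0_compat _ _ Heps HB')))].
  intros u [Hhu Hu].
  assert (Hh' : Rabs (h u) <= B') by (unfold B'; pose proof (Rle_abs B); lra).
  assert (Small : Rabs u * Rabs (h u) <= eps).
  { replace eps with (eps / B' * B') by (field; lra).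
    apply Rmult_le_compat; auto using Rabs_pos; lra. }
  rewrite Rabs_mult, <- RPow_abs. cbn [pow].
  replace (Rabs u * Rabs u ^ n * Rabs (h u)) with (Rabs u * Rabs (h u) * Rabs u ^ n) by ring.
  apply Rmult_le_compat_r; [apply pow_le, Rabs_pos|exact Small].
Qed.

Lemma little_o_comp (n : nat) (g E : R -> R) :
  little_o n g -> (exists C, locally 0 (fun u => Rabs (E u) <= C * Rabs u)) ->
  little_o n (fun u => g (E u)).
Proof.
  intros Hg [C HC] eps Heps.
  set (C' := Rabs C + 1).
  assert (HC' : 0 < C') by (unfold C'; pose proof (Rabs_pos C); lra).
  assert (HCn : 0 < C' ^ n) by (apply pow_lt; lra).
  destruct (proj1 (locally0_iff _) (Hg (eps / C' ^ n) (Rdiv_lt_0_compat _ _ Heps HCn)))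
    as [d [Hd Hgd]].
  eapply filter_imp;
    [|exact (near0_and _ _ HC (locally0_abs_lt (d / C') (Rdiv_lt_0_compat _ _ Hd HC')))].
  intros u [HEu Hu].
  assert (HE' : Rabs (E u) <= C' * Rabs u).
  { unfold C' in *. pose proof (Rle_abs C). pose proof (Rabs_pos u). nra. }
  assert (HEd : Rabs (E u) < d).
  { apply Rmult_lt_compat_l with (r := C') in Hu; [|exact HC'].
    replace (C' * (d / C')) with d in Hu by (field; lra). lra. }
  eapply Rle_trans; [exact (Hgd _ HEd)|].
  apply Rle_trans with (eps / C' ^ n * (C' * Rabs u) ^ n).
  - apply Rmult_le_compat_l; [apply Rlt_le, Rdiv_lt_0_compat; auto|].
    apply pow_incr. split; [apply Rabs_pos|exact HE'].
  - rewrite Rpow_mult_distr. right; field; lra.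
Qed.

Lemma little_o_lead_coeff (n k : nat) (c : R) (h : R -> R) :
  (k <= n)%nat -> bounded_near0 h -> little_o n (fun u => u ^ k * (c + u * h u)) -> c = 0.
Proof.
  intros Hk [B HB] Hg.
  destruct (Req_dec c 0) as [|Hc]; [assumption|exfalso].
  assert (Hpc : 0 < Rabs c) by (apply Rabs_pos_lt; exact Hc).
  set (B' := Rabs B + 1).
  assert (HB' : 0 < B') by (unfold B'; pose proof (Rabs_pos B); lra).
  assert (Hr : 0 < Rmin 1 (Rabs c / (2 * B')))
    by (apply Rmin_pos; [lra|apply Rdiv_lt_0_compat; lra]).
  destruct (proj1 (locally0_iff _) (near0_and _ _ (near0_and _ _ HB (Hg (Rabs c / 2) ltac:(lra)))
                                      (locally0_abs_lt _ Hr))) as [d [Hd Hall]].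
  set (u := d / 2).
  assert (Hu : Rabs u = u) by (apply Rabs_pos_eq; unfold u; lra).
  destruct (Hall u ltac:(rewrite Hu; unfold u; lra)) as [[Hhu Hgu] Hsmall].
  rewrite Hu in Hsmall.
  assert (Hu1 : u <= 1) by (pose proof (Rmin_l 1 (Rabs c / (2 * B'))); lra).
  assert (Huc : u < Rabs c / (2 * B')) by (pose proof (Rmin_r 1 (Rabs c / (2 * B'))); lra).
  (* dividing by |u|^k: |c + u h(u)| <= |c| / 2 *)
  assert (Hpk : 0 < Rabs u ^ k) by (apply pow_lt; rewrite Hu; unfold u; lra).
  assert (Lead : Rabs (c + u * h u) <= Rabs c / 2).
  { apply Rmult_le_reg_l with (Rabs u ^ k); [exact Hpk|].
    rewrite RPow_abs at 1. rewrite <- Rabs_mult. eapply Rle_trans; [exact Hgu|].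
    rewrite Rmult_comm. apply Rmult_le_compat_r; [lra|].
    apply pow_abs_antimono; [rewrite Hu|]; auto. }
  (* while |u h(u)| < |c| / 2 *)
  assert (Tail : Rabs (u * h u) < Rabs c / 2).
  { rewrite Rabs_mult, Hu.
    assert (Hh' : Rabs (h u) <= B') by (unfold B'; pose proof (Rle_abs B); lra).
    apply Rle_lt_trans with (u * B'); [apply Rmult_le_compat_l; [unfold u; lra|exact Hh']|].
    apply Rmult_lt_compat_r with (r := B') in Huc; [|exact HB'].
    replace (Rabs c / (2 * B') * B') with (Rabs c / 2) in Huc by (field; lra). exact Huc. }
  pose proof (Rabs_triang (c + u * h u) (- (u * h u))) as Tri.
  replace (c + u * h u + - (u * h u)) with c in Tri by ring.
  rewrite Rabs_Ropp in Tri. lra.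
Qed.

(** * Jets of order 4 at 0 *)

Record jet := Jet { j0 : R; j1 : R; j2 : R; j3 : R; j4 : R }.

Definition jet_eval (x : jet) (u : R) : R :=
  j0 x + j1 x * u + j2 x * u ^ 2 + j3 x * u ^ 3 + j4 x * u ^ 4.

Definition has_jet (F : R -> R) (x : jet) : Prop :=
  little_o 4 (fun u => F u - jet_eval x u).

Definition jet_const (c : R) : jet := Jet c 0 0 0 0.

Definition even_jet (c2 c4 : R) : jet := Jet 1 0 c2 0 c4.

Definition jet_add (x y : jet) : jet :=
  Jet (j0 x + j0 y) (j1 x + j1 y) (j2 x + j2 y) (j3 x + j3 y) (j4 x + j4 y).

Definition jet_scal (c : R) (x : jet) : jet :=
  Jet (c * j0 x) (c * j1 x) (c * j2 x) (c * j3 x) (c * j4 x).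

Definition jet_mul (x y : jet) : jet :=
  Jet (j0 x * j0 y) (j0 x * j1 y + j1 x * j0 y)
    (j0 x * j2 y + j1 x * j1 y + j2 x * j0 y)
    (j0 x * j3 y + j1 x * j2 y + j2 x * j1 y + j3 x * j0 y)
    (j0 x * j4 y + j1 x * j3 y + j2 x * j2 y + j3 x * j1 y + j4 x * j0 y).

Definition jet_mul_carry (x y : jet) : jet :=
  Jet (j1 x * j4 y + j2 x * j3 y + j3 x * j2 y + j4 x * j1 y)
    (j2 x * j4 y + j3 x * j3 y + j4 x * j2 y) (j3 x * j4 y + j4 x * j3 y) (j4 x * j4 y) 0.

(* Multiplicative inverse, when j0 x <> 0 (solves jet_mul x y = jet_const 1). *)
Definition jet_inv (x : jet) : jet :=
  let y0 := / j0 x in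
  let y1 := - (j1 x * y0) * y0 in
  let y2 := - (j1 x * y1 + j2 x * y0) * y0 in
  let y3 := - (j1 x * y2 + j2 x * y1 + j3 x * y0) * y0 in
  let y4 := - (j1 x * y3 + j2 x * y2 + j3 x * y1 + j4 x * y0) * y0 in
  Jet y0 y1 y2 y3 y4.

Fixpoint jet_pow (x : jet) (n : nat) : jet :=
  match n with O => jet_const 1 | S n => jet_mul x (jet_pow x n) end.

(* Composition f o e, meaningful when j0 e = 0. *)
Definition jet_comp (f e : jet) : jet :=
  jet_add (jet_add (jet_add (jet_add (jet_const (j0 f)) (jet_scal (j1 f) e))
    (jet_scal (j2 f) (jet_pow e 2))) (jet_scal (j3 f) (jet_pow e 3)))
    (jet_scal (j4 f) (jet_pow e 4)).

Definition jet_tail (x : jet) : jet := Jet (j1 x) (j2 x) (j3 x) (j4 x) 0.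

Lemma jet_eval_bounded (x : jet) : bounded_near0 (jet_eval x).
Proof.
  unfold jet_eval. repeat apply bounded_plus; try apply bounded_mult;
    auto using bounded_const, bounded_id, bounded_pow.
Qed.

Lemma has_jet_ext (F G : R -> R) (x : jet) :
  locally 0 (fun u => F u = G u) -> has_jet F x -> has_jet G x.
Proof.
  intros E. apply little_o_ext. eapply filter_imp; [|exact E]. intros u Eu; rewrite Eu; reflexivity.
Qed.

Lemma has_jet_eval (x : jet) : has_jet (jet_eval x) x.
Proof.
  apply (little_o_ext 4 (fun _ => 0)); [|apply little_o_zero].
  apply filter_forall. intro; ring.
Qed.

Lemma has_jet_const (c : R) : has_jet (fun _ => c) (jet_const c).
Proof.
  apply (has_jet_ext (jet_eval (jet_const c))); [|apply has_jet_eval].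
  apply filter_forall. intro; unfold jet_eval; simpl; ring.
Qed.

Lemma has_jet_plus (F G : R -> R) (x y : jet) :
  has_jet F x -> has_jet G y -> has_jet (fun u => F u + G u) (jet_add x y).
Proof.
  intros HF HG. apply (little_o_ext 4 (fun u => (F u - jet_eval x u) + (G u - jet_eval y u))).
  - apply filter_forall. intro; unfold jet_eval, jet_add; simpl; ring.
  - exact (little_o_plus 4 _ _ HF HG).
Qed.

Lemma has_jet_scal (c : R) (F : R -> R) (x : jet) :
  has_jet F x -> has_jet (fun u => c * F u) (jet_scal c x).
Proof.
  intro HF. apply (little_o_ext 4 (fun u => c * (F u - jet_eval x u))).
  - apply filter_forall. intro; unfold jet_eval, jet_scal; simpl; ring.
  - exact (little_o_scal 4 c _ HF).
Qed.

Lemma jet_mul_eval (x y : jet) (u : R) :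
  jet_eval x u * jet_eval y u = jet_eval (jet_mul x y) u + u ^ 5 * jet_eval (jet_mul_carry x y) u.
Proof. unfold jet_eval, jet_mul, jet_mul_carry; simpl; ring. Qed.

Lemma has_jet_bounded (F : R -> R) (x : jet) : has_jet F x -> bounded_near0 F.
Proof.
  intro HF. destruct (little_o_bounded 4 _ HF) as [B HB]. destruct (jet_eval_bounded x) as [C HC].
  exists (B + C). eapply filter_imp; [|exact (near0_and _ _ HB HC)]. intros u [H1 H2].
  replace (F u) with ((F u - jet_eval x u) + jet_eval x u) by ring.
  eapply Rle_trans; [apply Rabs_triang|lra].
Qed.

Lemma has_jet_mult (F G : R -> R) (x y : jet) :
  has_jet F x -> has_jet G y -> has_jet (fun u => F u * G u) (jet_mul x y).
Proof.
  intros HF HG.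
  apply (little_o_ext 4 (fun u => ((F u - jet_eval x u) * G u + (G u - jet_eval y u) * jet_eval x u)
                                   + u ^ 5 * jet_eval (jet_mul_carry x y) u)).
  - apply filter_forall. intro u.
    replace (jet_eval (jet_mul x y) u)
      with (jet_eval x u * jet_eval y u - u ^ 5 * jet_eval (jet_mul_carry x y) u)
      by (rewrite jet_mul_eval; ring).
    ring.
  - apply little_o_plus; [apply little_o_plus|].
    + exact (little_o_mult_bounded 4 _ _ HF (has_jet_bounded G y HG)).
    + exact (little_o_mult_bounded 4 _ _ HG (jet_eval_bounded x)).
    + exact (little_o_pow_succ 4 _ (jet_eval_bounded _)).
Qed.

Lemma has_jet_lipschitz0 (F : R -> R) (x : jet) :
  has_jet F x -> exists C, locally 0 (fun u => Rabs (F u - j0 x) <= C * Rabs u).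
Proof.
  intro HF. destruct (jet_eval_bounded (jet_tail x)) as [B HB].
  exists (1 + B).
  eapply filter_imp; [|exact (near0_and _ _ (near0_and _ _ (HF 1 Rlt_0_1) HB)
                                          (locally0_abs_lt 1 Rlt_0_1))].
  intros u [[Hrem Htail] Hu].
  assert (Split : F u - j0 x = (F u - jet_eval x u) + u * jet_eval (jet_tail x) u)
    by (unfold jet_eval, jet_tail; simpl; ring).
  assert (H4 : Rabs u ^ 4 <= Rabs u).
  { pose proof (pow_abs_antimono u 1 4 ltac:(lra) ltac:(lia)) as H14. simpl in H14. lra. }
  rewrite Split. eapply Rle_trans; [apply Rabs_triang|].
  rewrite Rabs_mult. pose proof (Rabs_pos u).
  assert (Rabs u * Rabs (jet_eval (jet_tail x) u) <= Rabs u * B)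
    by (apply Rmult_le_compat_l; auto). lra.
Qed.

Lemma has_jet_near_j0 (F : R -> R) (x : jet) (eps : R) :
  has_jet F x -> 0 < eps -> locally 0 (fun u => Rabs (F u - j0 x) < eps).
Proof.
  intros HF Heps. destruct (has_jet_lipschitz0 F x HF) as [C HC].
  set (C' := Rabs C + 1).
  assert (HC' : 0 < C') by (unfold C'; pose proof (Rabs_pos C); lra).
  eapply filter_imp;
    [|exact (near0_and _ _ HC (locally0_abs_lt (eps / C') (Rdiv_lt_0_compat _ _ Heps HC')))].
  intros u [H1 H2].
  apply Rmult_lt_compat_l with (r := C') in H2; [|exact HC'].
  replace (C' * (eps / C')) with eps in H2 by (field; lra).
  unfold C' in *. pose proof (Rle_abs C). pose proof (Rabs_pos u). nra.
Qed.

Lemma has_jet_pos (F : R -> R) (x : jet) :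
  has_jet F x -> 0 < j0 x -> locally 0 (fun u => 0 < F u).
Proof.
  intros HF Hx. eapply filter_imp; [|exact (has_jet_near_j0 F x (j0 x) HF Hx)].
  intros u Hu. apply Rabs_def2 in Hu. lra.
Qed.

Lemma has_jet_inv (F : R -> R) (x : jet) :
  has_jet F x -> j0 x <> 0 -> has_jet (fun u => / F u) (jet_inv x).
Proof.
  intros HF Hx.
  assert (Hpx : 0 < Rabs (j0 x)) by (apply Rabs_pos_lt; exact Hx).
  (* |F| stays above |j0 x| / 2 near 0, so 1/F is bounded *)
  assert (Apart : locally 0 (fun u => Rabs (j0 x) / 2 <= Rabs (F u))).
  { eapply filter_imp; [|exact (has_jet_near_j0 F x (Rabs (j0 x) / 2) HF ltac:(lra))].
    intros u Hu. cbv beta in Hu. pose proof (Rabs_triang_inv (j0 x) (j0 x - F u)) as Tri.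
    rewrite Rabs_minus_sym in Hu. replace (j0 x - (j0 x - F u)) with (F u) in Tri by ring. lra. }
  assert (InvBounded : bounded_near0 (fun u => / F u)).
  { exists (2 / Rabs (j0 x)). eapply filter_imp; [|exact Apart]. intros u Hu.
    rewrite Rabs_inv. replace (2 / Rabs (j0 x)) with (/ (Rabs (j0 x) / 2)) by (field; lra).
    apply Rinv_le_contravar; lra. }
  assert (Unit : jet_mul x (jet_inv x) = jet_const 1)
    by (unfold jet_mul, jet_inv, jet_const; simpl; f_equal; field; exact Hx).
  (* 1/F - 1/x = -(F * (1/x) - 1) / F *)
  apply (little_o_ext 4 (fun u => (-1) * (F u * jet_eval (jet_inv x) u
                                         - jet_eval (jet_mul x (jet_inv x)) u) * / F u)).
  - eapply filter_imp; [|exact Apart]. intros u Hu. cbv beta in Hu.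
    assert (F u <> 0) by (intro E; rewrite E, Rabs_R0 in Hu; lra).
    rewrite Unit. unfold jet_eval at 2; simpl. field. auto.
  - apply little_o_mult_bounded; [|exact InvBounded].
    apply little_o_scal. exact (has_jet_mult _ _ _ _ HF (has_jet_eval _)).
Qed.

Lemma has_jet_pow (E : R -> R) (e : jet) (n : nat) :
  has_jet E e -> has_jet (fun u => E u ^ n) (jet_pow e n).
Proof.
  intro HE. induction n as [|n IH]; [exact (has_jet_const 1)|].
  exact (has_jet_mult _ _ _ _ HE IH).
Qed.

Lemma has_jet_comp (F E : R -> R) (f e : jet) :
  has_jet F f -> has_jet E e -> j0 e = 0 -> has_jet (fun u => F (E u)) (jet_comp f e).
Proof.
  intros HF HE He.
  assert (Poly : has_jet (fun u => jet_eval f (E u)) (jet_comp f e)).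
  { unfold jet_eval, jet_comp.
    repeat apply has_jet_plus; try apply has_jet_scal;
      auto using has_jet_const, has_jet_pow. }
  (* the remainder o(v^4) at v = E u = O(u) is o(u^4) *)
  assert (Rem : little_o 4 (fun u => F (E u) - jet_eval f (E u))).
  { apply (little_o_comp 4 (fun v => F v - jet_eval f v) E HF).
    destruct (has_jet_lipschitz0 E e HE) as [C HC]. exists C.
    rewrite He in HC. eapply filter_imp; [|exact HC]. intros u Hu. cbv beta in Hu.
    rewrite Rminus_0_r in Hu. exact Hu. }
  apply (little_o_ext 4 (fun u => (F (E u) - jet_eval f (E u))
                                   + (jet_eval f (E u) - jet_eval (jet_comp f e) u))).
  - apply filter_forall. intro; ring.
  - exact (little_o_plus 4 _ _ Rem Poly).
Qed.

Lemma jet_eval_little_o (z : jet) : little_o 4 (jet_eval z) -> z = Jet 0 0 0 0 0.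
Proof.
  destruct z as [z0 z1 z2 z3 z4]. intro Hz.
  assert (Lead : forall k c h, (k <= 4)%nat -> bounded_near0 h ->
            (forall u, jet_eval (Jet z0 z1 z2 z3 z4) u = u ^ k * (c + u * h u)) -> c = 0).
  { intros k c h Hk Hh E. apply (little_o_lead_coeff 4 k c h Hk Hh).
    eapply little_o_ext; [|exact Hz]. apply filter_forall. exact E. }
  assert (E0 : z0 = 0).
  { apply (Lead 0%nat z0 (jet_eval (Jet z1 z2 z3 z4 0))); [lia|apply jet_eval_bounded|].
    intro u; unfold jet_eval; simpl; ring. }
  subst z0.
  assert (E1 : z1 = 0).
  { apply (Lead 1%nat z1 (jet_eval (Jet z2 z3 z4 0 0))); [lia|apply jet_eval_bounded|].
    intro u; unfold jet_eval; simpl; ring. }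
  subst z1.
  assert (E2 : z2 = 0).
  { apply (Lead 2%nat z2 (jet_eval (Jet z3 z4 0 0 0))); [lia|apply jet_eval_bounded|].
    intro u; unfold jet_eval; simpl; ring. }
  subst z2.
  assert (E3 : z3 = 0).
  { apply (Lead 3%nat z3 (fun _ => z4)); [lia|apply bounded_const|].
    intro u; unfold jet_eval; simpl; ring. }
  subst z3.
  assert (E4 : z4 = 0).
  { apply (Lead 4%nat z4 (fun _ => 0)); [lia|apply bounded_const|].
    intro u; unfold jet_eval; simpl; ring. }
  subst z4. reflexivity.
Qed.

Lemma jet_unique (F : R -> R) (x y : jet) : has_jet F x -> has_jet F y -> x = y.
Proof.
  intros Hx Hy.
  assert (Diff : little_o 4 (jet_eval (jet_add y (jet_scal (-1) x)))).
  { apply (little_o_ext 4 (fun u => (F u - jet_eval x u) + (-1) * (F u - jet_eval y u))).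
    - apply filter_forall. intro; unfold jet_eval, jet_add, jet_scal; simpl; ring.
    - exact (little_o_plus 4 _ _ Hx (little_o_scal 4 (-1) _ Hy)). }
  apply jet_eval_little_o in Diff. destruct x, y.
  unfold jet_add, jet_scal in Diff; simpl in Diff. injection Diff; intros.
  f_equal; lra.
Qed.

(** * The profile of a homogeneous mean *)

Definition profile (X : R -> R -> R) (u : R) : R := X (1 - u) (1 + u).

Lemma mean_by_profile (X : R -> R -> R) (A B : R) :
  homogeneous_mean X -> 0 < A -> 0 < B ->
  X A B = (A + B) / 2 * profile X ((B - A) / (A + B)).
Proof.
  intros HX HA HB. unfold profile. rewrite <- HX.
  - f_equal; field; lra.
  - lra.
  - replace (1 - (B - A) / (A + B)) with (2 * A / (A + B)) by (field; lra).
    apply Rdiv_lt_0_compat; lra.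
  - replace (1 + (B - A) / (A + B)) with (2 * B / (A + B)) by (field; lra).
    apply Rdiv_lt_0_compat; lra.
Qed.

Lemma profile_even (X : R -> R -> R) (u : R) :
  symmetric_mean X -> Rabs u < 1 -> profile X (- u) = profile X u.
Proof.
  intros HX Hu. unfold profile. apply Rabs_def2 in Hu.
  replace (1 - - u) with (1 + u) by ring. replace (1 + - u) with (1 - u) by ring.
  apply HX; lra.
Qed.

Lemma profile_near_1 (X : R -> R -> R) (u : R) :
  is_mean X -> 0 <= u < 1 -> Rabs (profile X u - 1) <= u.
Proof.
  intros HX Hu. unfold profile. destruct (HX (1 - u) (1 + u)) as [_ [Hmin Hmax]]; try lra.
  rewrite Rmin_left in Hmin by lra. rewrite Rmax_right in Hmax by lra.
  apply Rabs_le; lra.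
Qed.

Lemma powerRZ_inv_odd (u : R) (n : nat) :
  0 < u -> powerRZ (/ u) (1 - 2 * Z.of_nat n) = / u * u ^ (2 * n).
Proof.
  intro Hu. replace (1 - 2 * Z.of_nat n)%Z with (1 + - Z.of_nat (2 * n))%Z by lia.
  rewrite powerRZ_add, powerRZ_neg', <- pow_powerRZ, pow_inv, Rinv_inv
    by (apply Rinv_neq_0_compat; lra).
  simpl. ring.
Qed.

(* The expansion at x = 1/u, t = 1 is an expansion of the profile in even powers of u. *)
Lemma profile_expansion (X : R -> R -> R) (a : nat -> R) (Nn : nat) (eps : R) :
  homogeneous_mean X -> has_sym_asymp_expansion X a -> 0 < eps ->
  exists d, 0 < d /\ forall u, 0 < u < d ->
    Rabs (profile X u - sum_f_R0 (fun n => a n * u ^ (2 * n)) Nn) <= eps * u ^ (2 * Nn).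
Proof.
  intros HX He Heps. destruct (He 1 Nn eps Heps) as [X0 HX0].
  set (x0 := Rmax X0 1 + 1).
  assert (Hx0 : 2 <= x0) by (unfold x0; pose proof (Rmax_r X0 1); lra).
  exists (/ x0). split; [apply Rinv_0_lt_compat; lra|].
  intros u [Hu Hud].
  assert (Hinv : x0 < / u).
  { rewrite <- (Rinv_inv x0). apply Rinv_lt_contravar; [nra|exact Hud]. }
  assert (Hu1 : u < 1).
  { assert (/ x0 <= / 2) by (apply Rinv_le_contravar; lra). lra. }
  assert (Hbound := HX0 (/ u) ltac:(unfold x0 in Hinv; pose proof (Rmax_l X0 1); lra)).
  assert (Hprof : X (/ u - 1) (/ u + 1) = / u * profile X u).
  { unfold profile. rewrite <- HX by (try apply Rinv_0_lt_compat; lra). f_equal; field; lra. }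
  assert (Hsum : sym_partial_sum a 1 (/ u) Nn = / u * sum_f_R0 (fun n => a n * u ^ (2 * n)) Nn).
  { unfold sym_partial_sum. rewrite scal_sum. apply sum_eq. intros n _.
    rewrite powerRZ_inv_odd, pow1 by exact Hu. ring. }
  rewrite Hprof, Hsum, powerRZ_inv_odd in Hbound by exact Hu.
  rewrite <- Rmult_minus_distr_l, Rabs_mult, Rabs_pos_eq in Hbound
    by (apply Rlt_le, Rinv_0_lt_compat; exact Hu).
  apply Rmult_le_reg_l with (/ u); [apply Rinv_0_lt_compat; exact Hu|].
  rewrite Hbound at 1. right; ring.
Qed.

Lemma expansion_leading_one (X : R -> R -> R) (a : nat -> R) :
  is_mean X -> homogeneous_mean X -> has_sym_asymp_expansion X a -> a 0%nat = 1.
Proof.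
  intros Hm Hh He.
  assert (Zero : Rabs (a 0%nat - 1) <= 0).
  { apply Rle_plus_epsilon. intros eps Heps.
    destruct (profile_expansion X a 0 (eps / 2) Hh He ltac:(lra)) as [d [Hd Hexp]].
    set (u := Rmin d (Rmin (eps / 2) 1) / 2).
    assert (Hu : 0 < u < d /\ u <= eps / 2 /\ u < 1).
    { unfold u. pose proof (Rmin_l d (Rmin (eps / 2) 1)). pose proof (Rmin_r d (Rmin (eps / 2) 1)).
      pose proof (Rmin_l (eps / 2) 1). pose proof (Rmin_r (eps / 2) 1).
      assert (0 < Rmin d (Rmin (eps / 2) 1)) by (repeat apply Rmin_pos; lra). lra. }
    specialize (Hexp u ltac:(lra)). simpl in Hexp.
    pose proof (profile_near_1 X u Hm ltac:(lra)) as Near.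
    replace (a 0%nat - 1) with ((profile X u - 1) - (profile X u - a 0%nat * 1)) by ring.
    eapply Rle_trans; [apply Rabs_triang|]. rewrite Rabs_Ropp. lra. }
  assert (Abs0 : Rabs (a 0%nat - 1) = 0) by (pose proof (Rabs_pos (a 0%nat - 1)); lra).
  apply Rabs_eq_0 in Abs0. lra.
Qed.

Lemma little_o_even (n : nat) (g : R -> R) :
  (forall u, Rabs u < 1 -> g (- u) = g u) -> g 0 = 0 ->
  (forall eps, 0 < eps -> exists d, 0 < d /\ forall u, 0 < u < d -> Rabs (g u) <= eps * u ^ n) ->
  little_o n g.
Proof.
  intros Heven Hzero Hright eps Heps. destruct (Hright eps Heps) as [d [Hd Hg]].
  apply locally0_iff. exists (Rmin d 1). split; [apply Rmin_pos; lra|].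
  intros u Hu. pose proof (Rmin_l d 1). pose proof (Rmin_r d 1).
  destruct (Rtotal_order u 0) as [Hneg|[Hz|Hpos]].
  - rewrite <- Heven by lra. rewrite (Rabs_left u Hneg) in Hu |- *.
    apply Hg. lra.
  - subst u. rewrite Hzero, Rabs_R0. apply Rmult_le_pos; [lra|apply pow_le; lra].
  - rewrite (Rabs_right u) in Hu |- * by lra. apply Hg. lra.
Qed.

Lemma profile_jet (X : R -> R -> R) (a : nat -> R) :
  is_mean X -> symmetric_mean X -> homogeneous_mean X -> has_sym_asymp_expansion X a ->
  has_jet (profile X) (even_jet (a 1%nat) (a 2%nat)).
Proof.
  intros Hm Hs Hh He. apply little_o_even.
  - intros u Hu. rewrite profile_even by assumption. unfold jet_eval, even_jet; simpl. ring.
  - pose proof (profile_near_1 X 0 Hm ltac:(lra)) as At0. apply Rabs_le_between in At0.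
    unfold jet_eval, even_jet; simpl. lra.
  - intros eps Heps. destruct (profile_expansion X a 2 eps Hh He Heps) as [d [Hd Hexp]].
    exists d. split; [exact Hd|]. intros u Hu. specialize (Hexp u Hu).
    assert (Sum : sum_f_R0 (fun n => a n * u ^ (2 * n)) 2
                  = jet_eval (even_jet (a 1%nat) (a 2%nat)) u).
    { simpl. rewrite (expansion_leading_one X a Hm Hh He). unfold jet_eval, even_jet; simpl; ring. }
    rewrite Sum in Hexp. exact Hexp.
Qed.

Definition jet_mean (f a b : jet) : jet :=
  jet_mul (jet_scal (1 / 2) (jet_add a b))
    (jet_comp f (jet_mul (jet_add b (jet_scal (-1) a)) (jet_inv (jet_add a b)))).

Lemma has_jet_mean (X : R -> R -> R) (f : jet) (A B : R -> R) (a b : jet) :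
  homogeneous_mean X -> has_jet (profile X) f -> has_jet A a -> has_jet B b ->
  j0 a = 1 -> j0 b = 1 -> has_jet (fun u => X (A u) (B u)) (jet_mean f a b).
Proof.
  intros HX Hf HA HB Ha Hb.
  assert (HS : has_jet (fun u => A u + B u) (jet_add a b)) by exact (has_jet_plus _ _ _ _ HA HB).
  apply (has_jet_ext (fun u => 1 / 2 * (A u + B u)
                               * profile X ((B u + -1 * A u) * / (A u + B u)))).
  - eapply filter_imp;
      [|exact (near0_and _ _ (has_jet_pos A a HA ltac:(lra))
                                                (has_jet_pos B b HB ltac:(lra)))].
    intros u [PA PB]. rewrite (mean_by_profile X (A u) (B u) HX PA PB).
    f_equal; [field|f_equal; field]; lra.
  - apply has_jet_mult; [exact (has_jet_scal _ _ _ HS)|].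
    apply has_jet_comp; [exact Hf| |simpl; rewrite Ha, Hb; ring].
    apply has_jet_mult; [exact (has_jet_plus _ _ _ _ HB (has_jet_scal _ _ _ HA))|].
    apply has_jet_inv; [exact HS|simpl; rewrite Ha, Hb; lra].
Qed.

(** * Explicit jet computations *)

Lemma jet_pow_infinitesimal (e1 e2 e3 e4 : R) :
  let e := Jet 0 e1 e2 e3 e4 in
  jet_pow e 2 = Jet 0 0 (e1 ^ 2) (2 * e1 * e2) (e2 ^ 2 + 2 * e1 * e3) /\
  jet_pow e 3 = Jet 0 0 0 (e1 ^ 3) (3 * e1 ^ 2 * e2) /\
  jet_pow e 4 = Jet 0 0 0 0 (e1 ^ 4).
Proof.
  intro e.
  assert (P2 : jet_pow e 2 = Jet 0 0 (e1 ^ 2) (2 * e1 * e2) (e2 ^ 2 + 2 * e1 * e3)).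
  { cbn -[pow]. unfold jet_mul, jet_const; cbn. f_equal; ring. }
  assert (P3 : jet_pow e 3 = Jet 0 0 0 (e1 ^ 3) (3 * e1 ^ 2 * e2)).
  { change (jet_pow e 3) with (jet_mul e (jet_pow e 2)). rewrite P2.
    unfold jet_mul; cbn. f_equal; ring. }
  split; [exact P2|split; [exact P3|]].
  change (jet_pow e 4) with (jet_mul e (jet_pow e 3)). rewrite P3.
  unfold jet_mul; cbn. f_equal; ring.
Qed.

Lemma jet_comp_even (c2 c4 : R) (e : jet) : j0 e = 0 ->
  jet_comp (even_jet c2 c4) e =
  Jet 1 0 (c2 * j1 e ^ 2) (2 * c2 * j1 e * j2 e)
    (c2 * (j2 e ^ 2 + 2 * j1 e * j3 e) + c4 * j1 e ^ 4).
Proof.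
  destruct e as [e0 e1 e2 e3 e4]; simpl; intros ->.
  destruct (jet_pow_infinitesimal e1 e2 e3 e4) as [P2 [P3 P4]].
  unfold jet_comp. rewrite P2, P3, P4. unfold jet_add, jet_scal, jet_const; simpl. f_equal; ring.
Qed.

Lemma jet_inv_two (x : jet) : j0 x = 2 ->
  jet_inv x = Jet (1 / 2) (- j1 x / 4) (j1 x ^ 2 / 8 - j2 x / 4)
    (- j1 x ^ 3 / 16 + j1 x * j2 x / 4 - j3 x / 4)
    (j1 x ^ 4 / 32 - 3 * j1 x ^ 2 * j2 x / 16 + j1 x * j3 x / 4 + j2 x ^ 2 / 8 - j4 x / 4).
Proof. destruct x as [x0 x1 x2 x3 x4]; simpl; intros ->. unfold jet_inv; simpl; f_equal; field. Qed.

Ltac jet_mean_compute :=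
  unfold jet_mean; rewrite jet_inv_two by (simpl; ring);
  rewrite jet_comp_even by (simpl; field);
  unfold jet_mul, jet_add, jet_scal, even_jet; cbn [j0 j1 j2 j3 j4]; f_equal; field.

(* Jet of N(1-u, M(1-u,1+u)) ... *)
Lemma jet_mean_left (p q al be : R) :
  jet_mean (even_jet p q) (Jet 1 (-1) 0 0 0) (even_jet al be) =
  Jet 1 (- (1/2)) (p/4 + al/2) (p/8 + al*p/2) (q/16 + p/16 + be/2 + al*p/8 + al^2*p/4).
Proof. jet_mean_compute. Qed.

(* ... of N(M(1-u,1+u), 1+u) ... *)
Lemma jet_mean_right (p q al be : R) :
  jet_mean (even_jet p q) (even_jet al be) (Jet 1 1 0 0 0) =
  Jet 1 (1/2) (p/4 + al/2) (- (p/8 + al*p/2)) (q/16 + p/16 + be/2 + al*p/8 + al^2*p/4).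
Proof. jet_mean_compute. Qed.

(* ... and of a mean applied to two mirror-image jets, which is even. *)
Lemma jet_mean_mirror (r s h c g d : R) :
  jet_mean (even_jet r s) (Jet 1 (-h) c g d) (Jet 1 h c (-g) d) =
  even_jet (c + r*h^2) (d + c*r*h^2 - 2*r*h*(g + h*c) + s*h^4).
Proof. jet_mean_compute. Qed.

(** * Stabilization in terms of coefficients *)

(* Equality of the jets of M(1-u,1+u) and K(N(1-u, M(1-u,1+u)), N(M(1-u,1+u), 1+u)),
   where the profiles of K, N, M have jets even_jet r s, even_jet p q, even_jet al be. *)
Definition stabilization_identities (r s p q al be : R) : Prop :=
  al = r/4 + p/4 + al/2 /\
  be = s/16 + q/16 + p/16 - 3/16*p*r + be/2 - al*r/8 + al*p/8 - al*p*r/2 + al^2*p/4.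

Lemma stabilized_identities (K N M : R -> R -> R) (r s p q al be : R) :
  homogeneous_mean K -> homogeneous_mean N ->
  has_jet (profile K) (even_jet r s) -> has_jet (profile N) (even_jet p q) ->
  has_jet (profile M) (even_jet al be) -> stabilized K N M ->
  stabilization_identities r s p q al be.
Proof.
  intros HhK HhN JK JN JM Hst.
  assert (Left : has_jet (fun u => N (1 - u) (profile M u))
                   (Jet 1 (- (1/2)) (p/4 + al/2) (p/8 + al*p/2)
                      (q/16 + p/16 + be/2 + al*p/8 + al^2*p/4))).
  { rewrite <- jet_mean_left. apply has_jet_mean; auto.
    apply (has_jet_ext (jet_eval (Jet 1 (-1) 0 0 0))); [|apply has_jet_eval].
    apply filter_forall. intro; unfold jet_eval; simpl; ring. }
  assert (Right : has_jet (fun u => N (profile M u) (1 + u))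
                   (Jet 1 (1/2) (p/4 + al/2) (- (p/8 + al*p/2))
                      (q/16 + p/16 + be/2 + al*p/8 + al^2*p/4))).
  { rewrite <- jet_mean_right. apply has_jet_mean; auto.
    apply (has_jet_ext (jet_eval (Jet 1 1 0 0 0))); [|apply has_jet_eval].
    apply filter_forall. intro; unfold jet_eval; simpl; ring. }
  assert (Outer := has_jet_mean K _ _ _ _ _ HhK JK Left Right eq_refl eq_refl).
  rewrite jet_mean_mirror in Outer.
  (* by stabilization, the outer mean is the profile of M *)
  assert (Stab : locally 0 (fun u => K (N (1 - u) (profile M u)) (N (profile M u) (1 + u))
                                     = profile M u)).
  { eapply filter_imp; [|exact (locally0_abs_lt 1 Rlt_0_1)]. intros u Hu. apply Rabs_def2 in Hu.
    unfold profile at 3. rewrite (Hst (1 - u) (1 + u)) by lra. reflexivity. }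
  assert (E := jet_unique _ _ _ JM (has_jet_ext _ _ _ Stab Outer)).
  unfold even_jet in E. injection E as E2 E4.
  split; lra.
Qed.

(** * Algebra of the coefficient identities *)

(* For a stable mean (stabilized by itself), a_2 is determined by a_1. *)
Lemma stable_second_coefficient (r s : R) :
  stabilization_identities r s r s r s -> s = r * (1 + r) * (1 - 4 * r) / 6.
Proof. intros [_ H]. nra. Qed.

Lemma double_stabilization_algebra (r s p q al be : R) :
  s = r * (1 + r) * (1 - 4 * r) / 6 -> q = p * (1 + p) * (1 - 4 * p) / 6 ->
  stabilization_identities r s p q al be -> stabilization_identities p q r s al be ->
  (r = p \/ r + p = -1) /\
  (r = p -> al = r /\ al = p /\ be = 1/6 * al * (1 + al) * (1 - 4 * al)) /\
  (r + p = -1 -> al = -1/2 /\ be = -1/8).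
Proof.
  intros Hs Hq [E1 E2] [F1 F2].
  assert (Hal : al = (p + r) / 2) by lra.
  subst al s q.
  (* subtracting the two fourth-order identities *)
  assert (Key : (p - r) * ((1 + p + r) * (1 + p + r)) = 0) by nra.
  split; [|split].
  - apply Rmult_integral in Key. destruct Key as [Z|Z]; [left; lra|].
    apply Rmult_integral in Z. right; destruct Z; lra.
  - intro Hrp. subst r. split; [lra|split; [lra|nra]].
  - intro Hsum. split; [lra|nra].
Qed.

Theorem mainTheorem10 (K N M : R -> R -> R) (aK aN aM : nat -> R) :
  is_mean K -> symmetric_mean K -> homogeneous_mean K -> stable_mean K ->
  is_mean N -> symmetric_mean N -> homogeneous_mean N -> stable_mean N ->
  is_mean M -> symmetric_mean M -> homogeneous_mean M ->
  has_sym_asymp_expansion K aK ->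
  has_sym_asymp_expansion N aN ->
  has_sym_asymp_expansion M aM ->
  stabilized K N M -> stabilized N K M ->
  (aK 1%nat = aN 1%nat \/ aK 1%nat + aN 1%nat = -1) /\
  (aK 1%nat = aN 1%nat ->
     aM 1%nat = aK 1%nat /\ aM 1%nat = aN 1%nat /\
     aM 2%nat = 1/6 * aM 1%nat * (1 + aM 1%nat) * (1 - 4 * aM 1%nat)) /\
  (aK 1%nat + aN 1%nat = -1 ->
     aM 1%nat = -1/2 /\ aM 2%nat = -1/8).
Proof.
  intros HmK HsK HhK HstK HmN HsN HhN HstN HmM HsM HhM HeK HeN HeM HKN HNK.
  pose proof (profile_jet K aK HmK HsK HhK HeK) as JK.
  pose proof (profile_jet N aN HmN HsN HhN HeN) as JN.
  pose proof (profile_jet M aM HmM HsM HhM HeM) as JM.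
  apply (double_stabilization_algebra _ (aK 2%nat) _ (aN 2%nat)).
  - apply stable_second_coefficient, (stabilized_identities K K K); assumption.
  - apply stable_second_coefficient, (stabilized_identities N N N); assumption.
  - apply (stabilized_identities K N M); assumption.
  - apply (stabilized_identities N K M); assumption.
Qed.
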